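(* Let $\Gamma\subset\mathbb R^{n+1}$ be an open, convex, symmetric proper subcone with vertex at the origin containing $\Gamma^+$, and $f\in C^\infty(\Gamma)\cap C^0(\bar\Gamma)$ symmetric with $f_\ell=\partial f/\partial\lambda_\ell>0$ in $\Gamma$, $f$ concave in $\Gamma$, and $\sum_{\ell=1}^{n+1}f_\ell\lambda_\ell\ge-K_0(1+\sum_{\ell=1}^{n+1}f_\ell)$ for all $\lambda\in\Gamma$, for a constant $K_0$. Let $u$ be an admissible solution of $f(\lambda[\nabla^2u+\chi],-u_t)=\psi(x,t)$ in $M_T$, and at a point of $M_T$ let $\lambda=(\lambda_1,\dots,\lambda_n)=\lambda(U)$ be the eigenvalues of $U=\nabla^2u+\chi$, with $f_i=f_i(\lambda,-u_t)$ for $1\le i\le n$ and $f_\tau=f_{n+1}(\lambda,-u_t)$. Then for any index $1\le r\le n$ and any $\epsilon>0$, $$\sum_{i=1}^n f_i|\lambda_i|\le\epsilon\sum_{i\ne r}f_i\lambda_i^2+C\big(\epsilon,|u_t|,K_0,\sup_{M_T}\psi\big)\Big(1+\sum_{i=1}^n f_i+f_\tau\Big),$$ where the constant depends only on $\epsilon$, $|u_t|$, $K_0$, $\sup_{M_T}\psi$ (and $f$).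
   Context: $(M^n,g)$ is a compact Riemannian manifold with smooth boundary, $M_T=M\times(0,T]$, $\chi$ a smooth $(0,2)$-tensor, $\nabla^2u$ the spatial Hessian and $u_t$ the time derivative; eigenvalues are with respect to $g$. $\Gamma^+=\{\lambda\in\mathbb R^{n+1}:\lambda_\ell>0 \ \forall\ell\}$. $u$ admissible means $(\lambda[\nabla^2u+\chi],-u_t)\in\Gamma$ in $M_T$. *)

From HB Require Import structures.
From mathcomp Require Import all_boot all_order all_algebra all_fingroup.
From mathcomp Require Import all_classical all_reals all_analysis.
Set Implicit Arguments. Unset Strict Implicit. Unset Printing Implicit Defensive.
Import Order.TTheory GRing.Theory Num.Theory.
Import numFieldNormedType.Exports.
Local Open Scope classical_set_scope.
Local Open Scope ring_scope.

(* Points of R^{n+1} are row vectors 'rV[R]_(n.+1); the coordinates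
   0..n-1 are lambda_1..lambda_n and the last coordinate (ord_max) is
   the (n+1)-st one, i.e. -u_t. *)

Fixpoint Ck_on (R : realType) (m : nat) (k : nat) (A : set 'rV[R]_m)
    (f : 'rV[R]_m -> R) : Prop :=
  match k with
  | 0 => {within A, continuous f}
  | k'.+1 => (forall x, A x -> differentiable f x) /\
             (forall v : 'rV[R]_m, Ck_on k' A (fun x => 'D_v f x))
  end.

Definition smooth_on (R : realType) (m : nat) (A : set 'rV[R]_m)
    (f : 'rV[R]_m -> R) : Prop := forall k, Ck_on k A f.

Definition partial (R : realType) (m : nat) (f : 'rV[R]_m -> R) (l : 'I_m)
    (x : 'rV[R]_m) : R := 'D_(delta_mx 0 l) f x.

Definition pos_cone (R : realType) (m : nat) : set 'rV[R]_m :=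
  [set x | forall l, 0 < x 0 l].

Definition convex_set (R : realType) (m : nat) (A : set 'rV[R]_m) : Prop :=
  forall x y (t : R), A x -> A y -> 0 <= t <= 1 -> A (t *: x + (1 - t) *: y).

Definition is_cone (R : realType) (m : nat) (A : set 'rV[R]_m) : Prop :=
  forall x (t : R), A x -> 0 < t -> A (t *: x).

Definition sym_set (R : realType) (m : nat) (A : set 'rV[R]_m) : Prop :=
  forall (s : 'S_m) x, A x -> A (col_perm s x).

Definition sym_fun_on (R : realType) (m : nat) (A : set 'rV[R]_m)
    (f : 'rV[R]_m -> R) : Prop :=
  forall (s : 'S_m) x, A x -> f (col_perm s x) = f x.

Definition concave_on (R : realType) (m : nat) (A : set 'rV[R]_m)
    (f : 'rV[R]_m -> R) : Prop :=
  forall x y (t : R), A x -> A y -> 0 <= t <= 1 ->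
    t * f x + (1 - t) * f y <= f (t *: x + (1 - t) *: y).

Definition admissible_cone (R : realType) (m : nat) (G : set 'rV[R]_m) : Prop :=
  [/\ open G, convex_set G, is_cone G & sym_set G] /\
  G != setT /\ @pos_cone R m `<=` G.

Definition lam (R : realType) (n : nat) (x : 'rV[R]_n.+1) (i : 'I_n) : R :=
  x 0 (widen_ord (leqnSn n) i).

From HB Require Import structures.
From mathcomp Require Import all_boot all_order all_algebra all_fingroup.
From mathcomp Require Import all_classical all_reals all_analysis.
From mathcomp Require Import lra.
Import Order.TTheory GRing.Theory Num.Theory.
Import numFieldNormedType.Exports.
Local Open Scope classical_set_scope.
Local Open Scope ring_scope.

(* Concavity puts f below its tangent plane at lambda; evaluated at the point
   (1, ..., 1) of Gamma^+ this bounds sum_l f_l lambda_l from above by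
   sum_l f_l + psi - f(1), while the structure condition bounds it from below
   by -K0 (1 + sum_l f_l).  Splitting off the time coordinate, whose size is
   controlled by |u_t|, gives |sum_i f_i lambda_i| <= C (1 + sum_i f_i + f_tau).
   Finally, with s = sg lambda_r we have |lambda_r| = s lambda_r, and for i <> r
   |lambda_i| <= s lambda_i + 2 |lambda_i| <= s lambda_i + eps lambda_i^2 + 1/eps,
   so weighting by f_i and summing leaves only s sum_i f_i lambda_i to control. *)

Lemma concave_le_derive {R : realType} {m} {G : set 'rV[R]_m}
    {f : 'rV[R]_m -> R} {x y} :
  concave_on G f -> G x -> G y -> differentiable f x ->
  f y - f x <= 'D_(y - x) f x.
Proof.
move=> cf Gx Gy df.
have dv := @diff_derivable _ _ _ f x (y - x) df.
rewrite /derive; set q := (fun h : R => _).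
have q_right : q @ 0^'+ --> lim (q @ 0^').
  apply: cvg_trans dv => A /=; rewrite !nbhs_filterE /= /dnbhs /within /=.
  by apply: filterS => z Az z_gt0; apply: Az; rewrite gt_eqF.
apply: (cvgr_to_ge q_right); near=> h; rewrite /q /=.
have h_gt0 : 0 < h by near: h; exact: nbhs_right_gt.
have h_le1 : h <= 1 by near: h; exact: nbhs_right_le.
have := cf y x h Gy Gx; rewrite h_le1 ltW //= => /(_ isT) chord.
have -> : h *: (y - x) + x = h *: y + (1 - h) *: x.
  by rewrite scalerBr scalerBl scale1r addrAC addrA.
rewrite -[X in _ <= X]/(h^-1 * _) ler_pdivlMl //; nra.
Unshelve. all: by end_near.
Qed.

Lemma derive_sum_partial (R : realType) m (f : 'rV[R]_m -> R) x v :
  differentiable f x -> 'D_v f x = \sum_(l < m) v 0 l * partial f l x.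
Proof.
move=> df; rewrite /partial deriveE //.
under eq_bigr do rewrite deriveE //.
rewrite {1}(row_sum_delta v) linear_sum.
by apply: eq_bigr => l _; rewrite linearZ.
Qed.

Lemma normr_sum_partial_le {R : realType} {m} {G : set 'rV[R]_m}
    {f : 'rV[R]_m -> R} {K0 Psi : R} {x} :
  concave_on G f -> G (const_mx 1) -> G x -> differentiable f x ->
  (forall l, 0 <= partial f l x) ->
  - K0 * (1 + \sum_(l < m) partial f l x)
    <= \sum_(l < m) partial f l x * x 0 l ->
  f x <= Psi ->
  `|\sum_(l < m) partial f l x * x 0 l|
    <= (1 + `|Psi - f (const_mx 1)| + `|K0|) * (1 + \sum_(l < m) partial f l x).
Proof.
move=> cf G1 Gx df fl_ge0 + fxP.
set S := \sum_(l < m) partial f l x; set T := \sum_(l < m) partial f l x * x 0 l.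
move=> K0x.
have S_ge0 : 0 <= S by apply: sumr_ge0.
have := concave_le_derive cf Gx G1 df.
have -> : 'D_(const_mx 1 - x) f x = S - T.
  rewrite derive_sum_partial // -sumrB; apply: eq_bigr => l _.
  by rewrite !mxE mulrBl mul1r mulrC.
set P : R := `|Psi - f (const_mx 1)|; set k : R := `|K0|.
have P_ge0 : 0 <= P := normr_ge0 _.
have PS_ge0 : 0 <= P * S by rewrite mulr_ge0.
have kS : K0 * (1 + S) <= k * (1 + S).
  by apply: ler_wpM2r; [apply: addr_ge0 | apply: ler_norm].
have kS_ge0 : 0 <= k * (1 + S) by rewrite mulr_ge0 ?normr_ge0 ?addr_ge0.
have Pmax : Psi - f (const_mx 1) <= P := ler_norm _.
move=> tangent.
rewrite ler_norml; apply/andP; split; nra.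
Qed.

Lemma ler_2normr_sqr {R : realType} {eps} (a : R) : 0 < eps ->
  2 * `|a| <= eps * a ^+ 2 + eps^-1.
Proof.
move=> eps_gt0; rewrite -(real_normK (num_real a)); set t := `|a|.
have epsK : eps * eps^-1 = 1 by rewrite mulfV // gt_eqF.
have epsV_gt0 : 0 < eps^-1 by rewrite invr_gt0.
have : 0 <= eps^-1 * (eps * t - 1) ^+ 2 by rewrite mulr_ge0 ?sqr_ge0 // ltW.
nra.
Qed.

Lemma weighted_sum_normr_le {R : realType} {n} {p : 'I_n -> R} (a : 'I_n -> R)
    (r : 'I_n) {eps : R} :
  0 < eps -> (forall i, 0 <= p i) ->
  \sum_(i < n) p i * `|a i|
    <= Num.sg (a r) * \sum_(i < n) p i * a i
       + eps * \sum_(i < n | i != r) p i * a i ^+ 2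
       + eps^-1 * \sum_(i < n) p i.
Proof.
move=> eps_gt0 p_ge0; set s := Num.sg (a r).
have s_le1 : `|s| <= 1 by rewrite normr_sg; case: (_ != _).
have term i : p i * `|a i| <= s * (p i * a i)
    + eps * (if i != r then p i * a i ^+ 2 else 0) + eps^-1 * p i.
  have := p_ge0 i; have := ler_2normr_sqr (a i) eps_gt0.
  have epsV_ge0 : 0 <= eps^-1 by rewrite invr_ge0 ltW.
  case: eqP => [-> | _] /=; first by rewrite normrEsg -/s; nra.
  have : `|s * a i| <= `|a i| by rewrite normrM ler_piMl.
  have := ler_norm (- (s * a i)); rewrite normrN; nra.
apply: le_trans (ler_sum _ (fun i _ => term i)) _.
by rewrite !big_split /= -!mulr_sumr -big_mkcond.
Qed.

Theorem proposition2p3 (R : realType) (n : nat) (G : set 'rV[R]_n.+1)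
  (f : 'rV[R]_n.+1 -> R) (K0 : R) :
  admissible_cone G ->
  smooth_on G f ->
  {within closure G, continuous f} ->
  sym_fun_on (closure G) f ->
  (forall x, G x -> forall l, 0 < partial f l x) ->
  concave_on G f ->
  (forall x, G x ->
     \sum_(l < n.+1) partial f l x * x 0 l
       >= - K0 * (1 + \sum_(l < n.+1) partial f l x)) ->
  forall (eps : R), 0 < eps ->
  forall (B Psi : R),
  exists C : R,
  forall x : 'rV[R]_n.+1, G x ->
    `|x 0 ord_max| <= B ->  (* x 0 ord_max = - u_t, so |u_t| <= B *)
    f x <= Psi ->           (* f(lambda, -u_t) = psi <= sup psi *)
    forall r : 'I_n,
      \sum_(i < n) partial f (widen_ord (leqnSn n) i) x * `|lam x i|
      <= eps * \sum_(i < n | i != r)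
                 partial f (widen_ord (leqnSn n) i) x * (lam x i) ^+ 2
         + C * (1 + \sum_(i < n) partial f (widen_ord (leqnSn n) i) x
                  + partial f ord_max x).
Proof.
move=> [_ [_ posG]] smooth _ _ fl_gt0 cf K0_bound eps eps_gt0 B Psi.
have G1 : G (const_mx 1) by apply: posG => l; rewrite mxE.
set c := 1 + `|Psi - f (const_mx 1)| + `|K0|.
exists (c + B + eps^-1) => x Gx xB fxP r.
have fl_ge0 l : 0 <= partial f l x by exact/ltW/fl_gt0.
have hT := normr_sum_partial_le cf G1 Gx ((smooth 1%N).1 x Gx) fl_ge0
  (K0_bound x Gx) fxP.
have := weighted_sum_normr_le (lam x) r eps_gt0
  (fun i => fl_ge0 (widen_ord (leqnSn n) i)).
rewrite !big_ord_recr /= -/c in hT.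
set T := \sum_(i < n) _ * lam x i; rewrite -/T in hT.
set S := \sum_(i < n) partial f (widen_ord (leqnSn n) i) x.
set ft := partial f ord_max x in hT *; rewrite -/S in hT.
set y := ft * x 0 ord_max in hT.
have ft_ge0 : 0 <= ft := fl_ge0 _.
have sT_le : Num.sg (lam x r) * T <= `|T|.
  rewrite (le_trans (ler_norm _)) // normrM ler_piMl // normr_sg.
  by case: (_ != _).
have T_le : `|T| <= `|T + y| + ft * B.
  rewrite -{1}(addrK y T) (le_trans (ler_normB _ _)) // lerD2l normrM.
  by rewrite ger0_norm // ler_wpM2l.
have B_ge0 : 0 <= B by apply: le_trans xB.
have S_ge0 : 0 <= S by apply: sumr_ge0 => i _; apply: fl_ge0.
have BS_ge0 : 0 <= B * (1 + S) by rewrite mulr_ge0 ?addr_ge0.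
have epsVft_ge0 : 0 <= eps^-1 * (1 + ft).
  by rewrite mulr_ge0 ?addr_ge0 // invr_ge0 ltW.
lra.
Qed.
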